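(* Let $0<\epsilon<1/2$, $0<\rho<1$, $C=1-h(\epsilon)$, $0<R<C$ fixed, and $k=\lfloor Rn\rfloor$. There exists $\delta>0$ such that for every sequence of integers $(i_n)$ with $i_n\in(n(\epsilon-\delta),n(\epsilon+\delta))$, \[ \lim_{n\to\infty}\frac{\sum_{j=0}^{k}\binom{k}{j}\big(1-(1-2\epsilon)(1-2\rho)^j\big)^{i_n}\big(1+(1-2\epsilon)(1-2\rho)^j\big)^{n-i_n}}{2^n\epsilon^{i_n}(1-\epsilon)^{n-i_n}}=1 . \]
   Context: $h(\epsilon)=-\epsilon\log_2\epsilon-(1-\epsilon)\log_2(1-\epsilon)$. *)

From Stdlib Require Import Reals Lra Lia ZArith.
Open Scope R_scope.

Definition log2 (x : R) : R := ln x / ln 2.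

Definition h (e : R) : R := - e * log2 e - (1 - e) * log2 (1 - e).

(* floor of a real number (Int_part x = up x - 1 is the floor) *)
Definition floorZ (x : R) : Z := Int_part x.

Definition num_term (eps rho Rt : R) (n : nat) (i : Z) : R :=
  let k := Z.to_nat (floorZ (Rt * INR n)) in
  sum_f_R0 (fun j =>
     C k j
     * powerRZ (1 - (1 - 2 * eps) * (1 - 2 * rho) ^ j) i
     * powerRZ (1 + (1 - 2 * eps) * (1 - 2 * rho) ^ j) (Z.of_nat n - i)) k.

Definition den_term (eps : R) (n : nat) (i : Z) : R :=
  2 ^ n * powerRZ eps i * powerRZ (1 - eps) (Z.of_nat n - i).

(* Dividing by the denominator turns the [j]-th summand into
   [C k j * u_j ^ i * v_j ^ (n - i)], where [u_j] and [v_j] are the ratios of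
   the bases; with the bias [a_j = (1 - 2 eps) (1 - 2 rho) ^ j] both equal [1]
   for [j = 0], so the quotient is [1] plus a nonnegative remainder.  At
   [i = eps n] the [j]-th summand is [C k j * exp (n * rate eps a_j)], with
   [rate eps] concave, vanishing at its maximiser [a_0] and equal to
   [-(1 - h eps) ln 2] at [0].  For [j >= 1] the biases stay away from [a_0],
   so [rate eps a_j <= -c]; for large [j] they are close to [0], and
   [R < 1 - h eps] lets [exp (n * rate eps a_j)] beat the [2 ^ k] binomial
   coefficients.  Taking [delta] small keeps the cost of moving [i] away from
   [eps n] below both margins, so the remainder is bounded by two geometric
   sequences. *)

From Stdlib Require Import Reals Lra Lia ZArith.
Open Scope R_scope.

Lemma exp_le_exp (x y : R) : x <= y -> exp x <= exp y.
Proof. intros [Hlt | ->]; [left; apply exp_increasing, Hlt | right; reflexivity]. Qed.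

Lemma ln_le_ln (x y : R) : 0 < x -> x <= y -> ln x <= ln y.
Proof. intros Hx [Hlt | ->]; [left; apply ln_increasing | right]; auto. Qed.

Lemma ln_div (x y : R) : 0 < x -> 0 < y -> ln (x / y) = ln x - ln y.
Proof.
  intros Hx Hy. unfold Rdiv.
  rewrite ln_mult, ln_Rinv; [ring | | | apply Rinv_0_lt_compat]; assumption.
Qed.

Lemma ln_sub_le (x y : R) : 0 < x -> 0 < y -> ln x - ln y <= x / y - 1.
Proof.
  intros Hx Hy. rewrite <- ln_div by assumption.
  pose proof (exp_ineq1_le (ln (x / y))) as H.
  rewrite exp_ln in H by (apply Rdiv_lt_0_compat; assumption). lra.
Qed.

Lemma exp_INR_mul (n : nat) (y : R) : exp (INR n * y) = exp y ^ n.
Proof.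
  induction n as [|n IH].
  - rewrite Rmult_0_l. apply exp_0.
  - rewrite S_INR, Rmult_plus_distr_r, Rmult_1_l, exp_plus, IH. simpl. ring.
Qed.

Lemma pow_le_pow_of_le_1 (x : R) (m n : nat) :
  0 <= x <= 1 -> (m <= n)%nat -> x ^ n <= x ^ m.
Proof.
  intros Hx Hmn. replace n with (m + (n - m))%nat by lia. rewrite pow_add.
  rewrite <- (Rmult_1_r (x ^ m)) at 2.
  apply Rmult_le_compat_l; [apply pow_le; lra |].
  rewrite <- (pow1 (n - m)). apply pow_incr. lra.
Qed.

Lemma Rabs_le_inv (x b : R) : Rabs x <= b -> - b <= x <= b.
Proof.
  intros H. pose proof (Rle_abs x). pose proof (Rle_abs (- x)).
  rewrite Rabs_Ropp in *. lra.
Qed.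

Lemma C_ge_0 (n j : nat) : 0 <= C n j.
Proof.
  unfold C. left. apply Rdiv_lt_0_compat; [apply INR_fact_lt_0 |].
  apply Rmult_lt_0_compat; apply INR_fact_lt_0.
Qed.

Lemma C_n_0 (n : nat) : C n 0 = 1.
Proof. unfold C. rewrite Nat.sub_0_r. simpl. field. apply INR_fact_neq_0. Qed.

Lemma floorZ_to_nat_le (x : R) : 0 <= x -> INR (Z.to_nat (floorZ x)) <= x.
Proof.
  intros Hx. unfold floorZ. destruct (base_Int_part x) as [Hle _].
  destruct (Z_lt_le_dec (Int_part x) 0) as [Hneg | Hnn].
  - replace (Z.to_nat (Int_part x)) with 0%nat by lia. simpl. lra.
  - rewrite INR_IZR_INZ, Z2Nat.id; assumption.
Qed.

Lemma sum_f_R0_ge_first (f : nat -> R) (k : nat) :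
  (forall j, 0 <= f j) -> f 0%nat <= sum_f_R0 f k.
Proof.
  intros Hpos. destruct k as [|k]; [simpl; lra |].
  rewrite decomp_sum by lia. simpl pred.
  pose proof (cond_pos_sum (fun i => f (S i)) k (fun i => Hpos (S i))). lra.
Qed.

Lemma sum_f_R0_le_first_add (f g : nat -> R) (k : nat) :
  (forall j, (1 <= j)%nat -> f j <= g j) -> 0 <= g 0%nat ->
  sum_f_R0 f k <= f 0%nat + sum_f_R0 g k.
Proof.
  intros Hfg Hg0. induction k as [|k IH]; simpl; [lra |].
  specialize (Hfg (S k) ltac:(lia)). lra.
Qed.

Lemma ln2_pos : 0 < ln 2.
Proof. rewrite <- ln_1. apply ln_increasing; lra. Qed.

Lemma pow2_le_exp_pow (k n : nat) (r : R) :
  INR k <= r * INR n -> 2 ^ k <= exp (r * ln 2) ^ n.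
Proof.
  intros Hk. rewrite <- exp_INR_mul.
  replace (2 ^ k) with (exp (INR k * ln 2)) by (rewrite exp_INR_mul, exp_ln; lra).
  apply exp_le_exp. pose proof ln2_pos. nra.
Qed.

Lemma binomial_sum_ge_1 (w : nat -> R) (k : nat) :
  w 0%nat = 1 -> (forall j, 0 <= w j) -> 1 <= sum_f_R0 (fun j => C k j * w j) k.
Proof.
  intros H0 Hpos. rewrite <- H0, <- (Rmult_1_l (w 0%nat)), <- (C_n_0 k) at 1.
  apply (sum_f_R0_ge_first (fun j => C k j * w j)).
  intros j. apply Rmult_le_pos; [apply C_ge_0 | apply Hpos].
Qed.

(* The first [J] terms are weighted by [x ^ j / x ^ J >= 1], which lets the
   binomial theorem absorb them into [(1 + x) ^ k]. *)
Lemma binomial_sum_le_two_regimes (w : nat -> R) (k J : nat) (x P Q : R) :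
  0 < x <= 1 -> 0 <= P -> 0 <= Q -> w 0%nat <= 1 ->
  (forall j, (1 <= j)%nat -> (j < J)%nat -> w j <= P) ->
  (forall j, (J <= j)%nat -> w j <= Q) ->
  sum_f_R0 (fun j => C k j * w j) k <= 1 + P / x ^ J * (1 + x) ^ k + Q * 2 ^ k.
Proof.
  intros Hx HP HQ H0 Hsmall Hlarge.
  assert (HxJ : 0 < x ^ J) by (apply pow_lt; lra).
  assert (HPx : 0 <= P / x ^ J)
    by (apply Rmult_le_pos; [| apply Rlt_le, Rinv_0_lt_compat]; assumption).
  set (g := fun j => C k j * x ^ j * 1 ^ (k - j) * (P / x ^ J)
                     + C k j * 1 ^ j * 1 ^ (k - j) * Q).
  assert (Hg : forall j, g j = C k j * (x ^ j * (P / x ^ J) + Q))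
    by (intros j; unfold g; rewrite !pow1; ring).
  assert (Hwg : forall j, (1 <= j)%nat -> C k j * w j <= g j).
  { intros j Hj. rewrite Hg. apply Rmult_le_compat_l; [apply C_ge_0 |].
    pose proof (pow_le x j ltac:(lra)).
    destruct (Nat.lt_ge_cases j J) as [HjJ | HjJ].
    - pose proof (pow_le_pow_of_le_1 x j J ltac:(lra) ltac:(lia)).
      assert (P <= x ^ j * (P / x ^ J)).
      { replace (x ^ j * (P / x ^ J)) with (P * (x ^ j / x ^ J)) by (field; lra).
        rewrite <- (Rmult_1_r P) at 1. apply Rmult_le_compat_l; [lra |].
        apply Rmult_le_reg_r with (x ^ J); [lra |].
        unfold Rdiv. rewrite Rmult_assoc, Rinv_l; lra. }
      specialize (Hsmall j Hj HjJ). lra.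
    - specialize (Hlarge j HjJ). nra. }
  eapply Rle_trans; [apply (sum_f_R0_le_first_add _ g k Hwg) |].
  - rewrite Hg. apply Rmult_le_pos; [apply C_ge_0 |]. simpl. lra.
  - unfold g. rewrite plus_sum, <- !scal_sum, <- !binomial, C_n_0. simpl.
    replace (1 + 1) with 2 by ring. rewrite Rplus_comm with (r1 := x). nra.
Qed.

Lemma Un_cv_1_of_geometric_bounds (u : nat -> R) (A r s : R) (N : nat) :
  0 <= A -> 0 <= r < 1 -> 0 <= s < 1 ->
  (forall n, (N <= n)%nat -> 1 <= u n <= 1 + A * r ^ n + s ^ n) ->
  Un_cv u 1.
Proof.
  intros HA Hr Hs Hu e He.
  destruct (pow_lt_1_zero r ltac:(rewrite Rabs_right; lra) (e / (2 * (A + 1))))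
    as [N1 HN1]; [apply Rdiv_lt_0_compat; lra |].
  destruct (pow_lt_1_zero s ltac:(rewrite Rabs_right; lra) (e / 2)) as [N2 HN2]; [lra |].
  exists (N + N1 + N2)%nat. intros n Hn. unfold R_dist.
  specialize (Hu n ltac:(lia)).
  specialize (HN1 n ltac:(lia)). specialize (HN2 n ltac:(lia)).
  rewrite Rabs_right in HN1, HN2 by (apply Rle_ge, pow_le; lra).
  assert (A * r ^ n <= (A + 1) * r ^ n) by (pose proof (pow_le r n ltac:(lra)); nra).
  assert ((A + 1) * r ^ n < e / 2).
  { apply Rmult_lt_compat_l with (r := A + 1) in HN1; [| lra].
    replace ((A + 1) * (e / (2 * (A + 1)))) with (e / 2) in HN1 by (field; lra). lra. }
  rewrite Rabs_right; lra.
Qed.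

Lemma binomial_sum_le_geometric (w : nat -> R) (k n J : nat) (x p q r : R) :
  0 < x <= 1 -> 0 <= p -> 0 <= q -> (k <= n)%nat -> INR k <= r * INR n ->
  w 0%nat <= 1 ->
  (forall j, (1 <= j)%nat -> (j < J)%nat -> w j <= p ^ n) ->
  (forall j, (J <= j)%nat -> w j <= q ^ n) ->
  sum_f_R0 (fun j => C k j * w j) k
    <= 1 + / x ^ J * ((1 + x) * p) ^ n + (q * exp (r * ln 2)) ^ n.
Proof.
  intros Hx Hp Hq Hkn Hk H0 Hsmall Hlarge.
  eapply Rle_trans.
  { apply (binomial_sum_le_two_regimes w k J x (p ^ n) (q ^ n)); auto; apply pow_le; lra. }
  apply Rplus_le_compat; [apply Rplus_le_compat_l |].
  - rewrite Rpow_mult_distr.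
    replace (p ^ n / x ^ J * (1 + x) ^ k) with (/ x ^ J * ((1 + x) ^ k * p ^ n))
      by (field; apply pow_nonzero; lra).
    apply Rmult_le_compat_l; [apply Rlt_le, Rinv_0_lt_compat, pow_lt; lra |].
    apply Rmult_le_compat_r; [apply pow_le; lra |].
    apply Rle_pow; [lra | exact Hkn].
  - rewrite Rpow_mult_distr. apply Rmult_le_compat_l; [apply pow_le; lra |].
    apply pow2_le_exp_pow, Hk.
Qed.

Lemma exists_one_add_mul_exp_neg_lt_1 (c : R) : 0 < c ->
  exists x, 0 < x <= 1 /\ 0 <= (1 + x) * exp (- c) < 1.
Proof.
  intros Hc. exists (Rmin 1 c).
  pose proof (Rmin_l 1 c). pose proof (Rmin_r 1 c).
  assert (0 < Rmin 1 c) by (apply Rmin_glb_lt; lra).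
  pose proof (exp_ineq1 c (Rgt_not_eq c 0 Hc)). pose proof (exp_pos c).
  split; [lra |]. rewrite exp_Ropp.
  split; [apply Rmult_le_pos; [| apply Rlt_le, Rinv_0_lt_compat]; lra |].
  apply Rmult_lt_reg_r with (exp c); [lra |].
  rewrite Rmult_assoc, Rinv_l; lra.
Qed.

Lemma h_pos (eps : R) : 0 < eps < 1 -> 0 < h eps.
Proof.
  intros He. unfold h, log2. pose proof ln2_pos.
  assert (ln eps < 0) by (rewrite <- ln_1; apply ln_increasing; lra).
  assert (ln (1 - eps) < 0) by (rewrite <- ln_1; apply ln_increasing; lra).
  assert (0 < - eps * ln eps) by nra. assert (0 < - (1 - eps) * ln (1 - eps)) by nra.
  replace (- eps * (ln eps / ln 2) - (1 - eps) * (ln (1 - eps) / ln 2))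
    with ((- eps * ln eps - (1 - eps) * ln (1 - eps)) / ln 2) by (field; lra).
  apply Rdiv_lt_0_compat; lra.
Qed.

Definition rate (eps a : R) : R :=
  eps * ln ((1 - a) / (2 * eps)) + (1 - eps) * ln ((1 + a) / (2 * (1 - eps))).

(* Concavity of [rate], from [ln x <= x - 1]. *)
Lemma rate_le_tangent (eps a b : R) :
  0 < eps < 1 -> -1 < a < 1 -> -1 < b < 1 ->
  rate eps a <= rate eps b + (a - b) * ((1 - eps) / (1 + b) - eps / (1 - b)).
Proof.
  intros He Ha Hb. unfold rate. rewrite !ln_div by lra.
  pose proof (ln_sub_le (1 - a) (1 - b) ltac:(lra) ltac:(lra)) as Hm.
  pose proof (ln_sub_le (1 + a) (1 + b) ltac:(lra) ltac:(lra)) as Hp.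
  apply (Rmult_le_compat_l eps) in Hm; [| lra].
  apply (Rmult_le_compat_l (1 - eps)) in Hp; [| lra].
  replace ((a - b) * ((1 - eps) / (1 + b) - eps / (1 - b)))
    with (eps * ((1 - a) / (1 - b) - 1) + (1 - eps) * ((1 + a) / (1 + b) - 1))
    by (field; lra).
  lra.
Qed.

Lemma rate_center (eps : R) : 0 < eps < 1 -> rate eps (1 - 2 * eps) = 0.
Proof.
  intros He. unfold rate.
  replace ((1 - (1 - 2 * eps)) / (2 * eps)) with 1 by (field; lra).
  replace ((1 + (1 - 2 * eps)) / (2 * (1 - eps))) with 1 by (field; lra).
  rewrite ln_1. ring.
Qed.

Lemma rate_0 (eps : R) : 0 < eps < 1 -> rate eps 0 = - (1 - h eps) * ln 2.
Proof.
  intros He. unfold rate, h, log2. pose proof ln2_pos.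
  rewrite !ln_div, !ln_mult by lra. rewrite !Rminus_0_r, !Rplus_0_r, ln_1.
  field. lra.
Qed.

Lemma rate_le_rate_0_add_abs (eps a : R) : 0 < eps < 1/2 -> -1 < a < 1 ->
  rate eps a <= rate eps 0 + Rabs a.
Proof.
  intros He Ha. pose proof (rate_le_tangent eps a 0 ltac:(lra) Ha ltac:(lra)) as H.
  replace ((a - 0) * ((1 - eps) / (1 + 0) - eps / (1 - 0))) with (a * (1 - 2 * eps))
    in H by (field; lra).
  pose proof (Rle_abs a). pose proof (Rabs_pos a). nra.
Qed.

(* Tangent lines at [b], midway between [a1] and the maximiser [1 - 2 eps]:
   the slope at [b] is positive and [rate eps b <= 0]. *)
Lemma rate_neg_below (eps a1 : R) : 0 < eps < 1/2 -> -1 < a1 < 1 - 2 * eps ->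
  exists c, 0 < c /\ forall a, -1 < a <= a1 -> rate eps a <= - c.
Proof.
  intros He Ha1. set (b := (a1 + (1 - 2 * eps)) / 2).
  set (slope := (1 - eps) / (1 + b) - eps / (1 - b)).
  assert (Hslope : 0 < slope).
  { unfold slope. replace ((1 - eps) / (1 + b) - eps / (1 - b))
      with ((1 - 2 * eps - b) / ((1 + b) * (1 - b))) by (unfold b; field; lra).
    apply Rdiv_lt_0_compat; unfold b; nra. }
  exists ((b - a1) * slope). split; [apply Rmult_lt_0_compat; unfold b; lra |].
  intros a Ha.
  pose proof (rate_le_tangent eps a b ltac:(lra) ltac:(lra) ltac:(unfold b; lra)) as Hab.
  pose proof (rate_le_tangent eps b (1 - 2 * eps) ltac:(lra) ltac:(unfold b; lra)
    ltac:(lra)) as Hb.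
  rewrite rate_center in Hb by lra.
  replace ((1 - eps) / (1 + (1 - 2 * eps)) - eps / (1 - (1 - 2 * eps))) with 0
    in Hb by (field; lra).
  fold slope in Hab. nra.
Qed.

Definition weight (eps a : R) (n m : nat) : R :=
  ((1 - a) / (2 * eps)) ^ m * ((1 + a) / (2 * (1 - eps))) ^ (n - m).

Lemma weight_ge_0 (eps a : R) (n m : nat) :
  0 < eps < 1 -> -1 <= a <= 1 -> 0 <= weight eps a n m.
Proof.
  intros He Ha. unfold weight.
  apply Rmult_le_pos; apply pow_le; unfold Rdiv;
    apply Rmult_le_pos; try apply Rlt_le, Rinv_0_lt_compat; lra.
Qed.

Lemma weight_center (eps : R) (n m : nat) :
  0 < eps < 1 -> weight eps (1 - 2 * eps) n m = 1.
Proof.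
  intros He. unfold weight.
  replace ((1 - (1 - 2 * eps)) / (2 * eps)) with 1 by (field; lra).
  replace ((1 + (1 - 2 * eps)) / (2 * (1 - eps))) with 1 by (field; lra).
  rewrite !pow1. ring.
Qed.

(* For [|a| <= 1 - 2 eps] the first base dominates the second, so the weight
   grows with [m]; the price of moving [m] from [eps n] up to [(eps + delta) n]
   is the log-ratio of the bases, at most [ln (1/eps) - ln eps]. *)
Lemma weight_le_exp_rate (eps a delta : R) (n m : nat) :
  0 < eps < 1/2 -> Rabs a <= 1 - 2 * eps -> 0 <= delta ->
  (m <= n)%nat -> INR m <= INR n * (eps + delta) ->
  weight eps a n m <= exp (INR n * (rate eps a + (ln (/ eps) - ln eps) * delta)).
Proof.
  intros He Ha Hd Hmn Hm. apply Rabs_le_inv in Ha.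
  unfold weight, rate.
  set (u := (1 - a) / (2 * eps)). set (v := (1 + a) / (2 * (1 - eps))).
  assert (Hu : 0 < u) by (apply Rdiv_lt_0_compat; lra).
  assert (Hv : 0 < v) by (apply Rdiv_lt_0_compat; lra).
  assert (Huv : v <= u).
  { unfold u, v. apply Rmult_le_reg_r with (4 * eps * (1 - eps)); [nra |].
    replace ((1 + a) / (2 * (1 - eps)) * (4 * eps * (1 - eps))) with (2 * eps * (1 + a))
      by (field; lra).
    replace ((1 - a) / (2 * eps) * (4 * eps * (1 - eps))) with (2 * (1 - eps) * (1 - a))
      by (field; lra).
    nra. }
  assert (Hu_le : u <= / eps).
  { unfold u. replace (/ eps) with (2 / (2 * eps)) by (field; lra).
    apply Rmult_le_compat_r; [apply Rlt_le, Rinv_0_lt_compat |]; lra. }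
  assert (Hv_ge : eps <= v).
  { unfold v. replace eps with (2 * eps * (1 - eps) / (2 * (1 - eps))) at 1
      by (field; lra).
    apply Rmult_le_compat_r; [apply Rlt_le, Rinv_0_lt_compat |]; nra. }
  pose proof (ln_le_ln v u Hv Huv).
  pose proof (ln_le_ln u (/ eps) Hu Hu_le).
  pose proof (ln_le_ln eps v ltac:(lra) Hv_ge).
  rewrite <- (exp_ln (u ^ m)), <- (exp_ln (v ^ (n - m))) by (apply pow_lt; assumption).
  rewrite <- exp_plus, !ln_pow, minus_INR by assumption.
  apply exp_le_exp.
  pose proof (pos_INR n). pose proof (pos_INR m).
  assert (0 <= (INR n * (eps + delta) - INR m) * (ln u - ln v))
    by (apply Rmult_le_pos; lra).
  assert (0 <= INR n * delta * (ln (/ eps) - ln eps - (ln u - ln v)))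
    by (apply Rmult_le_pos; [apply Rmult_le_pos |]; lra).
  nra.
Qed.

Definition bias (eps rho : R) (j : nat) : R := (1 - 2 * eps) * (1 - 2 * rho) ^ j.

Lemma Rabs_bias (eps rho : R) (j : nat) :
  eps <= 1/2 -> Rabs (bias eps rho j) = (1 - 2 * eps) * Rabs (1 - 2 * rho) ^ j.
Proof.
  intros He. unfold bias.
  rewrite Rabs_mult, RPow_abs, (Rabs_right (1 - 2 * eps)) by lra. reflexivity.
Qed.

Lemma Rabs_bias_le (eps rho : R) (j : nat) :
  0 < eps <= 1/2 -> 0 < rho < 1 -> Rabs (bias eps rho j) <= 1 - 2 * eps.
Proof.
  intros He Hr. rewrite Rabs_bias by lra.
  assert (Rabs (1 - 2 * rho) ^ j <= 1 ^ j)
    by (apply pow_incr; split; [apply Rabs_pos | apply Rabs_le; lra]).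
  rewrite pow1 in *. pose proof (pow_le (Rabs (1 - 2 * rho)) j (Rabs_pos _)). nra.
Qed.

Lemma num_div_den_eq_sum (eps rho Rt : R) (n m : nat) :
  0 < eps < 1 -> (m <= n)%nat ->
  let k := Z.to_nat (floorZ (Rt * INR n)) in
  num_term eps rho Rt n (Z.of_nat m) / den_term eps n (Z.of_nat m)
  = sum_f_R0 (fun j => C k j * weight eps (bias eps rho j) n m) k.
Proof.
  intros He Hmn k. unfold num_term, den_term. fold k.
  rewrite <- Nat2Z.inj_sub by assumption.
  unfold Rdiv. rewrite Rmult_comm, scal_sum. apply sum_eq. intros j _.
  rewrite <- !pow_powerRZ. unfold weight, bias, Rdiv.
  replace (2 ^ n) with (2 ^ m * 2 ^ (n - m)) by (rewrite <- pow_add; f_equal; lia).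
  rewrite !Rpow_mult_distr, !pow_inv, !Rpow_mult_distr.
  field. repeat split; apply pow_nonzero; lra.
Qed.

Lemma rate_bias_neg (eps rho : R) : 0 < eps < 1/2 -> 0 < rho < 1 ->
  exists c, 0 < c /\ forall j, (1 <= j)%nat -> rate eps (bias eps rho j) <= - c.
Proof.
  intros He Hr. set (t := Rabs (1 - 2 * rho)).
  assert (Ht : 0 <= t < 1) by (split; [apply Rabs_pos | apply Rabs_def1; lra]).
  destruct (rate_neg_below eps ((1 - 2 * eps) * t) He) as [c [Hc Hrate]]; [nra |].
  exists c. split; [exact Hc |]. intros j Hj. apply Hrate.
  pose proof (Rabs_bias_le eps rho j ltac:(lra) Hr) as Hb.
  apply Rabs_le_inv in Hb. split; [lra |].
  apply Rle_trans with (Rabs (bias eps rho j)); [apply Rle_abs |].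
  rewrite Rabs_bias by lra. fold t. apply Rmult_le_compat_l; [lra |].
  rewrite <- (pow_1 t) at 2. apply pow_le_pow_of_le_1; [lra | exact Hj].
Qed.

Lemma rate_bias_eventually_le (eps rho g : R) :
  0 < eps < 1/2 -> 0 < rho < 1 -> 0 < g ->
  exists J, forall j, (J <= j)%nat ->
    rate eps (bias eps rho j) <= - (1 - h eps) * ln 2 + g.
Proof.
  intros He Hr Hg. set (t := Rabs (1 - 2 * rho)).
  assert (Ht : 0 <= t < 1) by (split; [apply Rabs_pos | apply Rabs_def1; lra]).
  destruct (pow_lt_1_zero t ltac:(rewrite Rabs_right; lra) g Hg) as [J HJ].
  exists J. intros j Hj.
  pose proof (Rabs_bias_le eps rho j ltac:(lra) Hr) as Hb.
  apply Rabs_le_inv in Hb.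
  eapply Rle_trans; [apply rate_le_rate_0_add_abs; lra |].
  rewrite rate_0 by lra. apply Rplus_le_compat_l. specialize (HJ j Hj).
  rewrite Rabs_right in HJ by (apply Rle_ge, pow_le; lra).
  rewrite Rabs_bias by lra. fold t.
  pose proof (pow_le t j (proj1 Ht)). nra.
Qed.

Lemma weight_bias_le_pow (eps rho delta y : R) (n m j : nat) :
  0 < eps < 1/2 -> 0 < rho < 1 -> 0 <= delta ->
  (m <= n)%nat -> INR m <= INR n * (eps + delta) ->
  rate eps (bias eps rho j) + (ln (/ eps) - ln eps) * delta <= y ->
  weight eps (bias eps rho j) n m <= exp y ^ n.
Proof.
  intros He Hr Hd Hmn Hm Hy.
  eapply Rle_trans.
  { apply (weight_le_exp_rate eps _ delta); try apply Rabs_bias_le; auto; lra. }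
  rewrite <- exp_INR_mul. apply exp_le_exp, Rmult_le_compat_l; [apply pos_INR | exact Hy].
Qed.

Lemma binomial_weight_sum_le (eps rho Rt : R) :
  0 < eps < 1/2 -> 0 < rho < 1 -> Rt < 1 - h eps ->
  exists delta, 0 < delta /\ exists A r s, 0 <= A /\ 0 <= r < 1 /\ 0 <= s < 1 /\
  forall k n m, INR k <= Rt * INR n -> (m <= n)%nat -> INR m <= INR n * (eps + delta) ->
  sum_f_R0 (fun j => C k j * weight eps (bias eps rho j) n m) k
    <= 1 + A * r ^ n + s ^ n.
Proof.
  intros He Hr HRt.
  destruct (rate_bias_neg eps rho He Hr) as [c [Hc Hneg]].
  set (gap := (1 - h eps - Rt) * ln 2).
  assert (Hgap : 0 < gap) by (apply Rmult_lt_0_compat; [lra | apply ln2_pos]).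
  destruct (rate_bias_eventually_le eps rho (gap / 4) He Hr ltac:(lra)) as [J HJ].
  set (K := ln (/ eps) - ln eps).
  assert (HK : 0 < K).
  { unfold K. rewrite ln_Rinv by lra.
    assert (ln eps < 0) by (rewrite <- ln_1; apply ln_increasing; lra). lra. }
  (* The cost [K * delta] of moving [m] above [eps n] is a quarter of both margins. *)
  set (delta := Rmin c gap / (4 * K)).
  assert (HKd : K * delta = Rmin c gap / 4) by (unfold delta; field; lra).
  pose proof (Rmin_l c gap). pose proof (Rmin_r c gap).
  assert (Hd : 0 < delta)
    by (apply Rdiv_lt_0_compat; [apply Rmin_glb_lt |]; lra).
  destruct (exists_one_add_mul_exp_neg_lt_1 (c / 2) ltac:(lra)) as [x [Hx Hr1]].
  exists delta. split; [exact Hd |].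
  exists (/ x ^ J), ((1 + x) * exp (- (c / 2))), (exp (- (gap / 2))).
  split; [apply Rlt_le, Rinv_0_lt_compat, pow_lt; lra |].
  split; [exact Hr1 |].
  split; [split; [apply Rlt_le, exp_pos | rewrite <- exp_0; apply exp_increasing; lra] |].
  intros k n m Hk Hmn Hm.
  assert (Hkn : (k <= n)%nat)
    by (apply INR_le; pose proof (h_pos eps ltac:(lra)); pose proof (pos_INR n); nra).
  set (y := - (1 - h eps) * ln 2 + gap / 2).
  replace (exp (- (gap / 2))) with (exp y * exp (Rt * ln 2))
    by (rewrite <- exp_plus; f_equal; unfold y, gap; field).
  apply binomial_sum_le_geometric with (x := x);
    try assumption; try (apply Rlt_le, exp_pos).
  - replace (bias eps rho 0) with (1 - 2 * eps) by (unfold bias; simpl; ring).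
    rewrite weight_center by lra. lra.
  - intros j Hj _. apply (weight_bias_le_pow eps rho delta); try assumption; try lra.
    specialize (Hneg j Hj). fold K. lra.
  - intros j Hj. apply (weight_bias_le_pow eps rho delta); try assumption; try lra.
    specialize (HJ j Hj). fold K. unfold y. lra.
Qed.

Theorem lemma2 (eps rho Rt : R)
  (Heps : 0 < eps < 1/2) (Hrho : 0 < rho < 1) (HR : 0 < Rt < 1 - h eps) :
  exists delta : R, 0 < delta /\
    forall i : nat -> Z,
      (exists N : nat, forall n : nat, (N <= n)%nat ->
         INR n * (eps - delta) < IZR (i n) < INR n * (eps + delta)) ->
      Un_cv (fun n => num_term eps rho Rt n (i n) / den_term eps n (i n)) 1.
Proof.
  destruct (binomial_weight_sum_le eps rho Rt Heps Hrho ltac:(lra))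
    as [delta [Hd [A [r [s [HA [Hr [Hs Hsum]]]]]]]].
  exists (Rmin eps delta). split; [apply Rmin_glb_lt; lra |].
  intros i [N HN]. apply (Un_cv_1_of_geometric_bounds _ A r s N HA Hr Hs).
  intros n Hn. specialize (HN n Hn).
  pose proof (Rmin_l eps delta). pose proof (Rmin_r eps delta). pose proof (pos_INR n).
  assert (Hi : i n = Z.of_nat (Z.to_nat (i n)))
    by (rewrite Z2Nat.id; [reflexivity | apply le_IZR; nra]).
  set (m := Z.to_nat (i n)) in Hi. rewrite Hi in HN |- *. rewrite <- INR_IZR_INZ in HN.
  assert (Hmn : (m <= n)%nat) by (apply INR_le; nra).
  rewrite num_div_den_eq_sum by (lra || assumption). split.
  - apply binomial_sum_ge_1.
    + replace (bias eps rho 0) with (1 - 2 * eps) by (unfold bias; simpl; ring).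
      apply weight_center; lra.
    + intros j. pose proof (Rabs_bias_le eps rho j ltac:(lra) Hrho) as Hb.
      apply Rabs_le_inv in Hb. apply weight_ge_0; lra.
  - apply Hsum; [apply floorZ_to_nat_le; nra | assumption | nra].
Qed.
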